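(* Let $(G,\cdot)$ be a loop with identity $e$ and $(H,\cdot)$ a non-trivial subloop such that $(xs\cdot z)s=x(sz\cdot s)$ for all $x,z\in G$, $s\in H$. If $(U,T,U)\in\mathrm{S_{1st}AUT}(G_H)$, then $T$ is a second Smarandache semi-automorphism of $G_H$, i.e. $eT=e$ and $(sy\cdot s)T=(sT\cdot yT)sT$ for all $y\in G$, $s\in H$.
   Context: Juxtaposition binds more tightly than $\cdot$; maps are written on the right. $SSYM(G_H)$ is the set of bijections $A$ of $G$ with $HA=H$. $\mathrm{S_{1st}AUT}(G_H)$ is the set of triples $(U,V,W)$ with $U,V,W\in SSYM(G_H)$ and $xU\cdot yV=(x\cdot y)W$ for all $x,y\in G$. *)

From Stdlib Require Import Classical.

Definition is_loop {G : Type} (mul : G -> G -> G) (e : G) : Prop :=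
  (forall x, mul e x = x /\ mul x e = x) /\
  (forall a b, exists! x, mul a x = b) /\
  (forall a b, exists! y, mul y a = b).

Definition is_subloop {G : Type} (mul : G -> G -> G) (e : G) (H : G -> Prop) : Prop :=
  H e /\
  (forall a b, H a -> H b -> H (mul a b)) /\
  (forall a b x, H a -> H b -> mul a x = b -> H x) /\
  (forall a b y, H a -> H b -> mul y a = b -> H y).

Definition bijection {G : Type} (A : G -> G) : Prop :=
  exists B : G -> G, (forall x, B (A x) = x) /\ (forall y, A (B y) = y).

Definition SSYM {G : Type} (H : G -> Prop) (A : G -> G) : Prop :=
  bijection A /\ (forall y, H y <-> exists x, H x /\ A x = y).

Definition S1stAUT {G : Type} (mul : G -> G -> G) (H : G -> Prop)
  (U V W : G -> G) : Prop :=
  SSYM H U /\ SSYM H V /\ SSYM H W /\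
  (forall x y, mul (U x) (V y) = W (mul x y)).


(* Taking x = e in  xU . yT = (x.y)U  gives  yU = eU . yT,  so the identity
   (xs.z)s = x(sz.s), applied with x = eU and s = sT (which lies in H because
   HT = H), turns  (sy.s)U = (sy)U . sT = (sU . yT) . sT  into
   eU . ((sT . yT) . sT); cancelling eU on the left gives the claim.
   Similarly, for x with xU = e, the case y = e reads  e . eT = e. *)

Section Autotopisms.

Context {G : Type} {mul : G -> G -> G} {e : G} (hG : is_loop mul e).

Lemma loop_cancel_l (a p q : G) : mul a p = mul a q -> p = q.
Proof.
  intro Hpq. destruct hG as [_ [hl _]].
  destruct (hl a (mul a q)) as [w [_ Hw]].
  rewrite <- (Hw p Hpq). apply Hw. reflexivity.
Qed.

Context {U V : G -> G} (hUVU : forall x y, mul (U x) (V y) = U (mul x y)).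

Lemma autotopism_factor (x : G) : U x = mul (U e) (V x).
Proof. rewrite hUVU, (proj1 (proj1 hG x)). reflexivity. Qed.

Lemma autotopism_middle_id : bijection U -> V e = e.
Proof.
  intros [Ui [_ hUUi]].
  assert (Hq := hUVU (Ui e) e).
  rewrite (proj2 (proj1 hG (Ui e))), hUUi in Hq.
  rewrite <- (proj1 (proj1 hG (V e))). exact Hq.
Qed.

End Autotopisms.

Lemma SSYM_stable {G : Type} {H : G -> Prop} {A : G -> G} {x : G} :
  SSYM H A -> H x -> H (A x).
Proof. intros [_ HA] Hx. apply HA. exists x. auto. Qed.

Theorem theorem3p6 (G : Type) (mul : G -> G -> G) (e : G) (H : G -> Prop)
  (hG : is_loop mul e) (hH : is_subloop mul e H)
  (hnt : exists s, H s /\ s <> e)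
  (hid : forall x z s, H s ->
     mul (mul (mul x s) z) s = mul x (mul (mul s z) s))
  (U T : G -> G) (hUTU : S1stAUT mul H U T U) :
  T e = e /\
  (forall y s, H s -> T (mul (mul s y) s) = mul (mul (T s) (T y)) (T s)).
Proof.
  destruct hUTU as [[hUbij _] [hT [_ hm]]].
  split.
  - exact (autotopism_middle_id hG hm hUbij).
  - intros y s Hs.
    apply (loop_cancel_l hG (U e)).
    rewrite <- (hid (U e) (T y) (T s) (SSYM_stable hT Hs)).
    rewrite <- !(autotopism_factor hG hm), !hm.
    reflexivity.
Qed.
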